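(* Let $\mathcal{H}$ be a finite-dimensional Hilbert space and let $\mathcal{E}$ be a unital quantum channel on $\mathcal{L}(\mathcal{H})$ (i.e. completely positive, trace-preserving, and $\mathcal{E}(I)=I$). Then the following four sets of operators coincide: (1) $MD(\mathcal{E})$; (2) $UCC(\mathcal{E})$; (3) $\mathcal{E}^\dagger(MD(\mathcal{E}^\dagger))$; (4) $\mathcal{E}^\dagger(UCC(\mathcal{E}^\dagger))$.
   Context: $\mathcal{E}^\dagger$ denotes the dual (Heisenberg-picture) map defined by $\mathrm{Tr}(\mathcal{E}(\rho)X)=\mathrm{Tr}(\rho\,\mathcal{E}^\dagger(X))$; if $\mathcal{E}(\rho)=\sum_iE_i\rho E_i^\dagger$ then $\mathcal{E}^\dagger(X)=\sum_iE_i^\dagger XE_i$. For a linear map $\phi$ on $\mathcal{L}(\mathcal{H})$, its multiplicative domain is $MD(\phi)=\{a\in\mathcal{L}(\mathcal{H}):\phi(a)\phi(b)=\phi(ab)\text{ and }\phi(b)\phi(a)=\phi(ba)\text{ for all }b\in\mathcal{L}(\mathcal{H})\}$. For a unital quantum channel $\Phi$ with Kraus operators $\{F_i\}$, $UCC(\Phi):=\{\rho\in\mathcal{L}(\mathcal{H}):\Phi^\dagger\circ\Phi(\rho)=\rho\}=\{\rho:[\rho,F_i^\dagger F_j]=0\text{ for all }i,j\}$. For a set $S$, $\mathcal{E}^\dagger(S)=\{\mathcal{E}^\dagger(s):s\in S\}$. *)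

(* Operators on an n-dimensional Hilbert space are n x n
   matrices over a numeric algebraically closed field C (e.g. algC);
   a quantum channel is given by a finite family of Kraus operators. *)
From HB Require Import structures.
From mathcomp Require Import all_boot all_order all_algebra.
Set Implicit Arguments. Unset Strict Implicit. Unset Printing Implicit Defensive.
Import Order.TTheory GRing.Theory Num.Theory.
Local Open Scope ring_scope.

Definition adjmx (C : numClosedFieldType) (n : nat) (A : 'M[C]_n) : 'M[C]_n :=
  (map_mx Num.conj A)^T.

Definition kraus_map (C : numClosedFieldType) (n k : nat) (F : 'I_k -> 'M[C]_n)
  (rho : 'M[C]_n) : 'M[C]_n :=
  \sum_(i < k) (F i *m rho *m adjmx (F i)).

Definition kraus_dual (C : numClosedFieldType) (n k : nat) (F : 'I_k -> 'M[C]_n)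
  (X : 'M[C]_n) : 'M[C]_n :=
  \sum_(i < k) (adjmx (F i) *m X *m F i).

(* Kraus family of a trace-preserving (sum F_i^dag F_i = I) and unital
   (sum F_i F_i^dag = I) channel; complete positivity is automatic. *)
Definition unital_channel (C : numClosedFieldType) (n k : nat)
  (F : 'I_k -> 'M[C]_n) : Prop :=
  \sum_(i < k) (adjmx (F i) *m F i) = 1%:M /\
  \sum_(i < k) (F i *m adjmx (F i)) = 1%:M.

Definition MD (C : numClosedFieldType) (n : nat) (phi : 'M[C]_n -> 'M[C]_n)
  (a : 'M[C]_n) : Prop :=
  forall b : 'M[C]_n, phi a *m phi b = phi (a *m b) /\ phi b *m phi a = phi (b *m a).

Definition UCC (C : numClosedFieldType) (n k : nat) (F : 'I_k -> 'M[C]_n)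
  (rho : 'M[C]_n) : Prop :=
  kraus_dual F (kraus_map F rho) = rho.

Definition dual_kraus (C : numClosedFieldType) (n k : nat) (F : 'I_k -> 'M[C]_n)
  : 'I_k -> 'M[C]_n := fun i => adjmx (F i).

Definition image_set (T : Type) (f : T -> T) (S : T -> Prop) (x : T) : Prop :=
  exists s, S s /\ x = f s.

(* The Kadison–Schwarz defect of the unital channel E with Kraus operators F_i
   is a sum of squares:
     E(a^* a) - E(a)^* E(a) = sum_i X_i^* X_i,   X_i = a F_i^* - F_i^* E(a).
   If a is in MD(E) the defect vanishes; if a is in UCC(E) its trace
   tr(a^* a) - tr(a^* E^dag E(a)) vanishes.  Either way every X_i = 0, and the
   intertwining relations a F_i^* = F_i^* E(a) give both E^dag E(a) = a and the
   multiplicativity of E at a.  Since E^dag is again a unital channel, with dual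
   E, this also gives MD(E^dag) = UCC(E^dag), and E^dag maps UCC(E^dag) onto
   UCC(E) with inverse E. *)
From HB Require Import structures.
From mathcomp Require Import all_boot all_order all_algebra.
Set Implicit Arguments. Unset Strict Implicit. Unset Printing Implicit Defensive.
Import Order.TTheory GRing.Theory Num.Theory.
Local Open Scope ring_scope.

Section Adjoint.
Variables (C : numClosedFieldType) (n : nat).
Implicit Types A B X : 'M[C]_n.

Lemma adjmxK A : adjmx (adjmx A) = A.
Proof. by apply/matrixP=> i j; rewrite !mxE conjCK. Qed.

Lemma adjmxM A B : adjmx (A *m B) = adjmx B *m adjmx A.
Proof. by rewrite /adjmx map_mxM trmx_mul. Qed.

Lemma adjmxB A B : adjmx (A - B) = adjmx A - adjmx B.
Proof. by apply/matrixP=> i j; rewrite !mxE rmorphB. Qed.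

Lemma adjmx_sum k (G : 'I_k -> 'M[C]_n) :
  adjmx (\sum_i G i) = \sum_i adjmx (G i).
Proof.
apply/matrixP=> i j; rewrite !mxE !summxE rmorph_sum.
by apply: eq_bigr => l _; rewrite !mxE.
Qed.

Lemma mxtrace_adjmx_mul X :
  \tr (adjmx X *m X) = \sum_j \sum_r (X r j)^* * X r j.
Proof.
apply: eq_bigr => j _; rewrite !mxE.
by apply: eq_bigr => r _; rewrite !mxE.
Qed.

Lemma mxtrace_adjmx_mul_ge0 X : 0 <= \tr (adjmx X *m X).
Proof.
rewrite mxtrace_adjmx_mul; apply: sumr_ge0 => j _; apply: sumr_ge0 => r _.
by rewrite mulrC mul_conjC_ge0.
Qed.

Lemma mxtrace_adjmx_mul_eq0 X : \tr (adjmx X *m X) = 0 -> X = 0.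
Proof.
rewrite mxtrace_adjmx_mul => tr0; apply/matrixP=> r j; rewrite mxE.
have ge0 j' r' : 0 <= (X r' j')^* * X r' j' by rewrite mulrC mul_conjC_ge0.
have col0 : \sum_r' (X r' j)^* * X r' j = 0.
  exact: (psumr_eq0P (fun j' _ => sumr_ge0 _ (fun r' _ => ge0 j' r')) tr0).
have /eqP := psumr_eq0P (fun r' _ => ge0 j r') col0 (i := r) isT.
by rewrite mulrC mul_conjC_eq0 => /eqP.
Qed.

Lemma mxtrace_sum_adjmx_mul_eq0 k (X : 'I_k -> 'M[C]_n) :
  \tr (\sum_i adjmx (X i) *m X i) = 0 -> forall i, X i = 0.
Proof.
rewrite raddf_sum => /psumr_eq0P tr0 i; apply: mxtrace_adjmx_mul_eq0.
by apply: tr0 => // j _; apply: mxtrace_adjmx_mul_ge0.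
Qed.

End Adjoint.

Lemma eq_MD (C : numClosedFieldType) n (phi psi : 'M[C]_n -> 'M[C]_n) :
  phi =1 psi -> forall a, MD phi a <-> MD psi a.
Proof.
by move=> eq_phi a; split=> MDa b; [rewrite -!eq_phi | rewrite !eq_phi]; apply: MDa.
Qed.

Section Kraus.
Variables (C : numClosedFieldType) (n k : nat) (F : 'I_k -> 'M[C]_n).
Local Notation ad := (@adjmx C n).
Local Notation E := (kraus_map F).
Local Notation D := (kraus_dual F).
Implicit Types a b x y : 'M[C]_n.

Lemma adjmx_kraus_map a : ad (E a) = E (ad a).
Proof.
rewrite adjmx_sum; apply: eq_bigr => i _.
by rewrite !adjmxM adjmxK mulmxA.
Qed.

Lemma adjmx_kraus_dual a : ad (D a) = D (ad a).
Proof.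
rewrite adjmx_sum; apply: eq_bigr => i _.
by rewrite !adjmxM adjmxK mulmxA.
Qed.

Lemma mxtrace_kraus_map_mul x y : \tr (E x *m y) = \tr (x *m D y).
Proof.
rewrite mulmx_suml mulmx_sumr !raddf_sum /=; apply: eq_bigr => i _.
by rewrite -!mulmxA mxtrace_mulC !mulmxA.
Qed.

Lemma kraus_map_dual_kraus : kraus_map (dual_kraus F) =1 D.
Proof. by move=> x; apply: eq_bigr => i _; rewrite /dual_kraus adjmxK. Qed.

Lemma kraus_dual_dual_kraus : kraus_dual (dual_kraus F) =1 E.
Proof. by move=> x; apply: eq_bigr => i _; rewrite /dual_kraus adjmxK. Qed.

Lemma unital_channel_dual : unital_channel F -> unital_channel (dual_kraus F).
Proof.
move=> [TP U]; split; [rewrite -U | rewrite -TP].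
  by apply: eq_bigr => i _; rewrite /dual_kraus adjmxK.
by apply: eq_bigr => i _; rewrite /dual_kraus adjmxK.
Qed.

Lemma UCC_dual_kraus_map a : UCC F a -> UCC (dual_kraus F) (E a).
Proof. by rewrite /UCC kraus_map_dual_kraus kraus_dual_dual_kraus => ->. Qed.

Lemma UCC_kraus_dual s : UCC (dual_kraus F) s -> UCC F (D s).
Proof. by rewrite /UCC kraus_map_dual_kraus kraus_dual_dual_kraus => ->. Qed.

Lemma UCC_adjmx a : UCC F a -> UCC F (ad a).
Proof. by rewrite /UCC -adjmx_kraus_map -adjmx_kraus_dual => ->. Qed.

Section TracePreserving.
Hypothesis TP : \sum_i (ad (F i) *m F i) = 1%:M.

Lemma mxtrace_kraus_map x : \tr (E x) = \tr x.
Proof.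
have D1 : D 1%:M = 1%:M by rewrite -[RHS]TP; apply: eq_bigr => i _; rewrite mulmx1.
by rewrite -[E x]mulmx1 mxtrace_kraus_map_mul D1 mulmx1.
Qed.

Lemma kraus_dual_intertwined a :
  (forall i, a *m ad (F i) = ad (F i) *m E a) -> D (E a) = a.
Proof.
move=> aF; rewrite /kraus_dual; under eq_bigr do rewrite -aF -mulmxA.
by rewrite -mulmx_sumr TP mulmx1.
Qed.

End TracePreserving.

Section Unital.
Hypothesis U : \sum_i (F i *m ad (F i)) = 1%:M.

Lemma kraus_map_schwarz_defect a :
  E (ad a *m a) - ad (E a) *m E a =
  \sum_i ad (a *m ad (F i) - ad (F i) *m E a) *m (a *m ad (F i) - ad (F i) *m E a).
Proof.
have expand i : ad (a *m ad (F i) - ad (F i) *m E a) *m (a *m ad (F i) - ad (F i) *m E a)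
    = F i *m (ad a *m a) *m ad (F i) - F i *m ad a *m ad (F i) *m E a
      - ad (E a) *m (F i *m a *m ad (F i)) + ad (E a) *m (F i *m ad (F i)) *m E a.
  rewrite adjmxB !adjmxM !adjmxK mulmxBl !mulmxBr.
  by rewrite opprB !addrA !mulmxA [LHS]addrAC.
under eq_bigr do rewrite expand.
rewrite !big_split /= !sumrN -mulmx_suml -mulmx_sumr -mulmx_suml -mulmx_sumr U mulmx1.
by rewrite -/(E (ad a *m a)) -/(E (ad a)) -adjmx_kraus_map -/(E a) subrK.
Qed.

Lemma intertwined_of_schwarz_defect a :
  \tr (E (ad a *m a) - ad (E a) *m E a) = 0 ->
  forall i, a *m ad (F i) = ad (F i) *m E a.
Proof.
rewrite kraus_map_schwarz_defect => /mxtrace_sum_adjmx_mul_eq0 X0 i.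
by apply/eqP; rewrite -subr_eq0 X0.
Qed.

Hypothesis TP : \sum_i (ad (F i) *m F i) = 1%:M.

Lemma UCC_intertwined a : UCC F a -> forall i, a *m ad (F i) = ad (F i) *m E a.
Proof.
move=> UCCa; apply: intertwined_of_schwarz_defect.
rewrite raddfB /= mxtrace_kraus_map // adjmx_kraus_map mxtrace_kraus_map_mul.
by rewrite UCCa subrr.
Qed.

Lemma MD_UCC a : MD E a <-> UCC F a.
Proof.
split=> [MDa | UCCa b].
  apply: kraus_dual_intertwined => //; apply: intertwined_of_schwarz_defect.
  by have [_ <-] := MDa (ad a); rewrite adjmx_kraus_map subrr linear0.
have aF := UCC_intertwined UCCa.
have Fa i : F i *m a = E a *m F i.
  have /(congr1 ad) := UCC_intertwined (UCC_adjmx UCCa) i.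
  by rewrite !adjmxM !adjmxK -adjmx_kraus_map adjmxK.
split.
  rewrite [E b]/kraus_map mulmx_sumr; apply: eq_bigr => i _.
  by rewrite !mulmxA -Fa.
rewrite [E b]/kraus_map mulmx_suml; apply: eq_bigr => i _.
by rewrite -!mulmxA -aF !mulmxA.
Qed.

End Unital.

End Kraus.

Theorem theorem6 (C : numClosedFieldType) (n k : nat) (F : 'I_k -> 'M[C]_n) :
  unital_channel F ->
  forall a : 'M[C]_n,
    (MD (kraus_map F) a <-> UCC F a) /\
    (UCC F a <-> image_set (kraus_dual F) (MD (kraus_dual F)) a) /\
    (image_set (kraus_dual F) (MD (kraus_dual F)) a <->
     image_set (kraus_dual F) (UCC (dual_kraus F)) a).
Proof.
move=> chF a; have [TP U] := chF; have [TP' U'] := unital_channel_dual chF.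
have MD_dual s : MD (kraus_dual F) s <-> UCC (dual_kraus F) s.
  exact: iff_trans (iff_sym (eq_MD (kraus_map_dual_kraus F) s)) (MD_UCC U' TP' s).
have UCC_image : UCC F a <-> image_set (kraus_dual F) (UCC (dual_kraus F)) a.
  split=> [UCCa | [s [UCCs ->]]]; last exact: UCC_kraus_dual.
  by exists (kraus_map F a); split; [apply: UCC_dual_kraus_map | rewrite UCCa].
have image_MD_UCC : image_set (kraus_dual F) (MD (kraus_dual F)) a <->
    image_set (kraus_dual F) (UCC (dual_kraus F)) a.
  by split=> -[s [Ss ->]]; exists s; split=> //; apply/MD_dual.
split; first exact: MD_UCC U TP a.
by split=> //; apply: iff_trans UCC_image (iff_sym image_MD_UCC).
Qed.
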